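(* Let $a\in[0,1]$ and, for $x\in(0,1)$, $$f(x):=\pi^2-36\big(\arcsin\tfrac x2\big)^2,\qquad g(x):=9(1-x^2).$$ Then $\mathrm{ARE}_{R,T}=f/g$ on $(0,1)$. Let $b:=\frac fg(a)$ and $c:=\big(\frac fg\big)'(a)$ (for $a=1$ these mean the one-sided limits at $1-$), and define $f_0(x):=f(x)-bg(x)-c(x-a)g(x)$, $g_0(x):=(x-a)^2g(x)$, and for $i=1,2,3,4$, $f_i:=a_if_{i-1}'$, $g_i:=a_ig_{i-1}'$, $r_i:=f_i/g_i$, where $$a_1(x)=\sqrt{4-x^2},\quad a_2(x)=\frac{\sqrt{4-x^2}}{2-x^2},\quad a_3(x)=\frac{(2-x^2)^2}{50-29x^2+9x^4},\quad a_4(x)=\frac{(50-29x^2+9x^4)^2}{2-x^2}.$$ Then on $(0,1)$: $r_4$ is strictly increasing, $f_4<0$ and $g_4<0$.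
   Context: $\mathrm{ARE}_{R,T}(\rho_0)$ is the Pitman asymptotic relative efficiency of Pearson's correlation $R$ to Kendall's $T$ for testing $H_0:\rho=\rho_0$ with i.i.d. bivariate normal data of correlation $\rho$; it equals $\frac{\sigma_T^2(\rho_0)\mu_R'(\rho_0)^2}{\sigma_R^2(\rho_0)\mu_T'(\rho_0)^2}$ with $\mu_R(\rho)=\rho$, $\sigma_R^2(\rho)=(1-\rho^2)^2$, $\mu_T(\rho)=\frac2\pi\arcsin\rho$, $\sigma_T^2(\rho)=\frac49-\frac{16}{\pi^2}(\arcsin\frac\rho2)^2$. *)

From Stdlib Require Import Reals.
From Coquelicot Require Import Coquelicot.
Open Scope R_scope.

(* Ingredients of the Pitman ARE of Pearson's R to Kendall's T. *)
Definition mu_R (rho : R) : R := rho.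
Definition sigma2_R (rho : R) : R := (1 - rho ^ 2) ^ 2.
Definition mu_T (rho : R) : R := 2 / PI * asin rho.
Definition sigma2_T (rho : R) : R := 4 / 9 - 16 / PI ^ 2 * (asin (rho / 2)) ^ 2.

Definition ARE_RT (rho0 : R) : R :=
  sigma2_T rho0 * (Derive mu_R rho0) ^ 2
  / (sigma2_R rho0 * (Derive mu_T rho0) ^ 2).

Definition fA (x : R) : R := PI ^ 2 - 36 * (asin (x / 2)) ^ 2.
Definition gA (x : R) : R := 9 * (1 - x ^ 2).
Definition hA (x : R) : R := fA x / gA x.

Definition f0 (a b c : R) (x : R) : R := fA x - b * gA x - c * (x - a) * gA x.
Definition g0 (a : R) (x : R) : R := (x - a) ^ 2 * gA x.

Definition a_coef (i : nat) (x : R) : R :=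
  match i with
  | 1%nat => sqrt (4 - x ^ 2)
  | 2%nat => sqrt (4 - x ^ 2) / (2 - x ^ 2)
  | 3%nat => (2 - x ^ 2) ^ 2 / (50 - 29 * x ^ 2 + 9 * x ^ 4)
  | 4%nat => (50 - 29 * x ^ 2 + 9 * x ^ 4) ^ 2 / (2 - x ^ 2)
  | _ => 1
  end.

Fixpoint f_seq (a b c : R) (i : nat) : R -> R :=
  match i with
  | O => f0 a b c
  | S j => fun x => a_coef (S j) x * Derive (f_seq a b c j) x
  end.

Fixpoint g_seq (a : R) (i : nat) : R -> R :=
  match i with
  | O => g0 a
  | S j => fun x => a_coef (S j) x * Derive (g_seq a j) x
  end.

Definition r_seq (a b c : R) (i : nat) (x : R) : R := f_seq a b c i x / g_seq a i x.

From Stdlib Require Import Reals Lra Lia Psatz.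
From Coquelicot Require Import Coquelicot.
Open Scope R_scope.

(* On (-1, 1) the four steps h_i = a_i h_(i-1)' can be carried out in closed form.
   The factor a_1 = sqrt (4 - x^2) turns the derivative of arcsin (x/2) into a constant,
   so the arcsine is gone from f_2 on, and the remaining factors are chosen so that
   each further derivative stays rational; the terms carrying a, b and c die out
   along the way, leaving
     f_4 = -144 (50 + 29 x^2 - 27 x^4) / (2 - x^2),
     g_4 = -864 (50 - 46 x^2 + 11 x^4 - 3 x^6)
   for every a, b, c.  Both are negative
   on (0, 1), and r_4 (x) = phi (x^2) for a rational phi whose derivative has a
   numerator that is positive on (0, 1). *)

Lemma is_derive_asin y : -1 < y < 1 -> is_derive asin y (1 / sqrt (1 - y ^ 2)).
Proof.
  intros Hy. apply is_derive_Reals.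
  apply derive_pt_eq_1 with (derivable_pt_asin y Hy).
  rewrite derive_pt_asin. unfold Rsqr. now rewrite <- Rsqr_pow2.
Qed.

Lemma ex_derive_asin y : -1 < y < 1 -> ex_derive asin y.
Proof. intros Hy. eexists. now apply is_derive_asin. Qed.

Lemma Derive_asin y : -1 < y < 1 -> Derive (fun z => asin z) y = 1 / sqrt (1 - y ^ 2).
Proof. intros Hy. now apply is_derive_unique, is_derive_asin. Qed.

Lemma ARE_RT_eq x : 0 < x < 1 -> ARE_RT x = fA x / gA x.
Proof.
  intros Hx. unfold ARE_RT.
  assert (D1 : Derive mu_R x = 1).
  { apply is_derive_unique. unfold mu_R. auto_derive; auto. }
  assert (D2 : Derive mu_T x = 2 / PI * (1 / sqrt (1 - x ^ 2))).
  { apply is_derive_unique. unfold mu_T. auto_derive.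
    - apply ex_derive_asin; lra.
    - rewrite Derive_asin by lra. ring. }
  rewrite D1, D2. unfold sigma2_T, sigma2_R, fA, gA.
  assert (0 < sqrt (1 - x ^ 2)) by (apply sqrt_lt_R0; nra).
  assert (hs : sqrt (1 - x ^ 2) * sqrt (1 - x ^ 2) = 1 - x ^ 2) by (apply sqrt_sqrt; nra).
  pose proof PI_RGT_0.
  set (s := sqrt (1 - x ^ 2)) in *. rewrite <- hs. field. lra.
Qed.

Lemma Derive_ext_on_interval (h H : R -> R) (lo hi t dH : R) :
  lo < t < hi -> (forall u, lo < u < hi -> h u = H u) -> is_derive H t dH ->
  Derive h t = dH.
Proof.
  intros Ht Heq HdH. rewrite <- (is_derive_unique H t dH HdH).
  apply Derive_ext_loc, (locally_interval _ t lo hi); simpl; try tauto.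
  intros u Hlo Hhi. now apply Heq.
Qed.

Definition w x := sqrt (4 - x ^ 2).

Lemma w_pos x : -2 < x < 2 -> 0 < w x.
Proof. intros Hx. apply sqrt_lt_R0. nra. Qed.

Lemma w_sq x : -2 < x < 2 -> w x * w x = 4 - x ^ 2.
Proof. intros Hx. apply sqrt_sqrt. nra. Qed.

Lemma Derive_asin_half x : -2 < x < 2 -> Derive (fun z => asin z) (x / 2) = 2 / w x.
Proof.
  intros Hx. rewrite Derive_asin by lra.
  pose proof (w_pos x Hx) as Hw.
  replace (1 - (x / 2) ^ 2) with ((w x / 2) ^ 2)
    by (replace ((w x / 2) ^ 2) with (w x * w x / 4) by field;
        rewrite w_sq by lra; field).
  rewrite sqrt_pow2 by lra. field. lra.
Qed.

Definition q x := 50 - 29 * x ^ 2 + 9 * x ^ 4.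

Lemma q_pos x : 0 < q x.
Proof. unfold q. nra. Qed.

Definition n4 t := 50 + 29 * t - 27 * t ^ 2.
Definition e4 t := 50 - 46 * t + 11 * t ^ 2 - 3 * t ^ 3.

Lemma n4_pos t : 0 < t < 1 -> 0 < n4 t.
Proof. intros Ht. unfold n4. nra. Qed.

Lemma e4_pos t : 0 < t < 1 -> 0 < e4 t.
Proof. intros Ht. unfold e4. nra. Qed.

Definition F4 x := -144 * n4 (x ^ 2) / (2 - x ^ 2).
Definition G4 x := -864 * e4 (x ^ 2).

Section f_sequence.

Variables a b c : R.

Lemma f_seq_succ_on j (F : R -> R) (dF t : R) :
  -1 < t < 1 -> (forall u, -1 < u < 1 -> f_seq a b c j u = F u) -> is_derive F t dF ->
  f_seq a b c (S j) t = a_coef (S j) t * dF.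
Proof. intros Ht HF HdF. cbn [f_seq]. now rewrite (Derive_ext_on_interval _ F (-1) 1 t dF). Qed.

Definition p1 x := 27 * c * x ^ 2 + 18 * (b - a * c) * x - 9 * c.
Definition F1 x := -72 * asin (x / 2) + w x * p1 x.
Definition F2 x := (-72 - x * p1 x + (4 - x ^ 2) * (54 * c * x + 18 * (b - a * c))) / (2 - x ^ 2).
Definition F3 x := -144 * x / q x + 9 * c.

Lemma is_derive_f0 x : -1 < x < 1 -> is_derive (f0 a b c) x (-72 * asin (x / 2) / w x + p1 x).
Proof.
  intros Hx. unfold f0, fA, gA. auto_derive.
  - apply ex_derive_asin; lra.
  - fold (x / 2). rewrite Derive_asin_half by lra. pose proof (w_pos x ltac:(lra)).
    unfold p1. field. lra.
Qed.

Lemma f_seq_1 t : -1 < t < 1 -> f_seq a b c 1 t = F1 t.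
Proof.
  intros Ht. cbn [f_seq a_coef]. rewrite (is_derive_unique _ _ _ (is_derive_f0 t Ht)).
  pose proof (w_pos t ltac:(lra)). unfold F1. fold (w t). field. lra.
Qed.

Lemma is_derive_F1 x : -1 < x < 1 ->
  is_derive F1 x (-72 / w x - x / w x * p1 x + w x * (54 * c * x + 18 * (b - a * c))).
Proof.
  intros Hx. unfold F1, w, p1. auto_derive.
  - repeat split; try apply ex_derive_asin; nra.
  - fold (x / 2). rewrite Derive_asin_half by lra. pose proof (w_pos x ltac:(lra)).
    unfold w in *. replace (4 + - (x * (x * 1))) with (4 - x ^ 2) by ring.
    field. lra.
Qed.

Lemma f_seq_2 t : -1 < t < 1 -> f_seq a b c 2 t = F2 t.
Proof.
  intros Ht. rewrite (f_seq_succ_on 1 F1 _ t Ht f_seq_1 (is_derive_F1 t Ht)).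
  pose proof (w_pos t ltac:(lra)). pose proof (w_sq t ltac:(lra)) as Hw.
  cbn [a_coef]. fold (w t). unfold F2. rewrite <- Hw. field. split; nra.
Qed.

Lemma is_derive_F2 x : -1 < x < 1 -> is_derive F2 x ((-144 * x + 9 * c * q x) / (2 - x ^ 2) ^ 2).
Proof.
  intros Hx. unfold F2, p1, q. auto_derive.
  - nra.
  - field. nra.
Qed.

Lemma f_seq_3 t : -1 < t < 1 -> f_seq a b c 3 t = F3 t.
Proof.
  intros Ht. rewrite (f_seq_succ_on 2 F2 _ t Ht f_seq_2 (is_derive_F2 t Ht)).
  pose proof (q_pos t). cbn [a_coef]. unfold F3, q in *. field. split; nra.
Qed.

Lemma is_derive_F3 x : is_derive F3 x (-144 * n4 (x ^ 2) / q x ^ 2).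
Proof.
  pose proof (q_pos x). unfold F3, n4, q in *. auto_derive.
  - nra.
  - field. nra.
Qed.

Lemma f_seq_4 t : -1 < t < 1 -> f_seq a b c 4 t = F4 t.
Proof.
  intros Ht. rewrite (f_seq_succ_on 3 F3 _ t Ht f_seq_3 (is_derive_F3 t)).
  pose proof (q_pos t). cbn [a_coef]. unfold F4, q in *. field. split; nra.
Qed.

End f_sequence.

Section g_sequence.

Variable a : R.

Lemma g_seq_succ_on j (G : R -> R) (dG t : R) :
  -1 < t < 1 -> (forall u, -1 < u < 1 -> g_seq a j u = G u) -> is_derive G t dG ->
  g_seq a (S j) t = a_coef (S j) t * dG.
Proof. intros Ht HG HdG. cbn [g_seq]. now rewrite (Derive_ext_on_interval _ G (-1) 1 t dG). Qed.

Definition dg0 x := 18 * (x - a) * (1 - x ^ 2) - 18 * x * (x - a) ^ 2.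
Definition d2g0 x := 18 * (1 - x ^ 2) - 72 * x * (x - a) - 18 * (x - a) ^ 2.
Definition G1 x := w x * dg0 x.
Definition G2 x := ((4 - x ^ 2) * d2g0 x - x * dg0 x) / (2 - x ^ 2).
Definition n3 x :=
  900 * a - 1728 * x - 522 * a * x ^ 2 + 1152 * x ^ 3 + 162 * a * x ^ 4 - 288 * x ^ 5.
Definition G3 x := n3 x / q x.

Lemma is_derive_g0 x : is_derive (g0 a) x (dg0 x).
Proof. unfold g0, gA, dg0. auto_derive; [easy | ring]. Qed.

Lemma g_seq_1 t : g_seq a 1 t = G1 t.
Proof. cbn [g_seq a_coef]. now rewrite (is_derive_unique _ _ _ (is_derive_g0 t)). Qed.

Lemma is_derive_G1 x : -1 < x < 1 -> is_derive G1 x (- x / w x * dg0 x + w x * d2g0 x).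
Proof.
  intros Hx. unfold G1, w, dg0, d2g0. auto_derive.
  - nra.
  - pose proof (w_pos x ltac:(lra)). unfold w in *.
    replace (4 + - (x * (x * 1))) with (4 - x ^ 2) by ring.
    field. lra.
Qed.

Lemma g_seq_2 t : -1 < t < 1 -> g_seq a 2 t = G2 t.
Proof.
  intros Ht. rewrite (g_seq_succ_on 1 G1 _ t Ht (fun u _ => g_seq_1 u) (is_derive_G1 t Ht)).
  pose proof (w_pos t ltac:(lra)). pose proof (w_sq t ltac:(lra)) as Hw.
  cbn [a_coef]. fold (w t). unfold G2. rewrite <- Hw. field. split; nra.
Qed.

Lemma is_derive_G2 x : -1 < x < 1 -> is_derive G2 x (n3 x / (2 - x ^ 2) ^ 2).
Proof.
  intros Hx. unfold G2, n3, dg0, d2g0. auto_derive.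
  - nra.
  - field. nra.
Qed.

Lemma g_seq_3 t : -1 < t < 1 -> g_seq a 3 t = G3 t.
Proof.
  intros Ht. rewrite (g_seq_succ_on 2 G2 _ t Ht g_seq_2 (is_derive_G2 t Ht)).
  pose proof (q_pos t). cbn [a_coef]. unfold G3, q in *. field. split; nra.
Qed.

Lemma is_derive_G3 x : is_derive G3 x (-864 * (2 - x ^ 2) * e4 (x ^ 2) / q x ^ 2).
Proof.
  pose proof (q_pos x). unfold G3, n3, e4, q in *. auto_derive.
  - nra.
  - field. nra.
Qed.

Lemma g_seq_4 t : -1 < t < 1 -> g_seq a 4 t = G4 t.
Proof.
  intros Ht. rewrite (g_seq_succ_on 3 G3 _ t Ht g_seq_3 (is_derive_G3 t)).
  pose proof (q_pos t). cbn [a_coef]. unfold G4, q in *. field. split; nra.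
Qed.

End g_sequence.

Definition phi4 t := n4 t / (6 * (2 - t) * e4 t).

(* In v = 1 - u only the top coefficient is negative. *)
Lemma phi4_numerator_pos u : 0 < u < 1 ->
  0 < 10000 - 12200 * u + 4412 * u ^ 2 + 386 * u ^ 3 - 720 * u ^ 4 + 162 * u ^ 5.
Proof.
  intros Hu. set (v := 1 - u).
  assert (Hv : 0 < v < 1) by (unfold v; lra).
  replace (10000 - 12200 * u + 4412 * u ^ 2 + 386 * u ^ 3 - 720 * u ^ 4 + 162 * u ^ 5)
    with (2040 + 4288 * v + 2870 * v ^ 2 + 874 * v ^ 3 + 90 * v ^ 4 * (1 - v) - 72 * v ^ 5)
    by (unfold v; ring).
  assert (0 < v ^ 2) by (apply pow_lt; lra).
  assert (0 < v ^ 3) by (apply pow_lt; lra).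
  assert (0 < v ^ 4 * (1 - v)) by (apply Rmult_lt_0_compat; [apply pow_lt|]; lra).
  assert (v ^ 5 < 1) by (apply pow_lt_1_compat; [lra | lia]).
  lra.
Qed.

Lemma phi4_increasing s t : 0 < s -> s < t -> t < 1 -> phi4 s < phi4 t.
Proof.
  apply (incr_function phi4 0 1 (fun u =>
    6 * (10000 - 12200 * u + 4412 * u ^ 2 + 386 * u ^ 3 - 720 * u ^ 4 + 162 * u ^ 5)
    / (6 * (2 - u) * e4 u) ^ 2)); simpl; intros u H0 H1;
    pose proof (e4_pos u (conj H0 H1)).
  - unfold phi4, n4, e4 in *. auto_derive.
    + apply Rgt_not_eq. nra.
    + field. split; apply Rgt_not_eq; nra.
  - pose proof (phi4_numerator_pos u (conj H0 H1)).
    apply Rdiv_lt_0_compat; nra.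
Qed.

Lemma F4_div_G4 x : 0 < x < 1 -> F4 x / G4 x = phi4 (x ^ 2).
Proof.
  intros Hx. pose proof (e4_pos (x ^ 2) ltac:(nra)).
  unfold F4, G4, phi4. field. split; nra.
Qed.

Lemma F4_neg x : 0 < x < 1 -> F4 x < 0.
Proof.
  intros Hx. pose proof (n4_pos (x ^ 2) ltac:(nra)).
  assert (0 < / (2 - x ^ 2)) by (apply Rinv_0_lt_compat; nra).
  unfold F4, Rdiv. nra.
Qed.

Lemma G4_neg x : 0 < x < 1 -> G4 x < 0.
Proof. intros Hx. pose proof (e4_pos (x ^ 2) ltac:(nra)). unfold G4. lra. Qed.

Theorem lemma2 (a b c : R) (ha : 0 <= a <= 1)
  (hb : (a < 1 -> b = hA a) /\
        (a = 1 -> filterlim hA (at_left 1) (locally b)))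
  (hc : (a < 1 -> is_derive hA a c) /\
        (a = 1 -> filterlim (Derive hA) (at_left 1) (locally c))) :
  (forall x, 0 < x < 1 -> ARE_RT x = fA x / gA x) /\
  (forall x y, 0 < x -> x < y -> y < 1 -> r_seq a b c 4 x < r_seq a b c 4 y) /\
  (forall x, 0 < x < 1 -> f_seq a b c 4 x < 0 /\ g_seq a 4 x < 0).
Proof.
  split; [exact ARE_RT_eq | split].
  - intros x y Hx Hxy Hy. unfold r_seq.
    rewrite !f_seq_4, !g_seq_4, !F4_div_G4 by lra.
    apply phi4_increasing; nra.
  - intros x Hx. rewrite f_seq_4, g_seq_4 by lra.
    split; [apply F4_neg | apply G4_neg]; lra.
Qed.
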